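(* Consider the system \[ \begin{aligned} \tfrac{d}{dt}\mathrm{LTR}_R &= k_{OFF}\,\mathrm{LTR}_I - k_{ON}\,\mathrm{LTR}_R,\\ \tfrac{d}{dt}\mathrm{LTR}_I &= -\Big[\tfrac{w_3w_4}{w_5}k_A(\mathrm{Tat}) + k_{OFF}\Big]\mathrm{LTR}_I + w_1k_I\,\mathrm{LTR}_A + k_{ON}\,\mathrm{LTR}_R,\\ \tfrac{d}{dt}\mathrm{LTR}_A &= \tfrac{w_3w_4}{w_5}k_A(\mathrm{Tat})\,\mathrm{LTR}_I - w_1k_I\,\mathrm{LTR}_A,\\ \tfrac{d}{dt}\mathrm{Tat} &= \alpha_{p_1}\mathrm{env}_I - \gamma_{p_1}\mathrm{Tat},\\ \tfrac{d}{dt}\mathrm{TAR} &= \alpha_{m_1,R}\mathrm{LTR}_R + \alpha_{m_1,I}\mathrm{LTR}_I + \alpha_{m_1,A}\mathrm{LTR}_A - \gamma_{m_1}\mathrm{TAR},\\ \tfrac{d}{dt}\mathrm{env}_I &= \alpha_{m_2,I}\mathrm{LTR}_I - (\gamma_{m_2}+\alpha_{p_1}+\alpha_{p_2})\mathrm{env}_I,\\ \tfrac{d}{dt}\mathrm{env}_A &= f_{m_2}(\mathrm{Tat})\,\mathrm{LTR}_A - (\gamma_{m_2}+\alpha_{p_2})\mathrm{env}_A,\\ \tfrac{d}{dt}\mathrm{Pr55} &= \alpha_{p_2}\mathrm{env}_I + \alpha_{p_2}\mathrm{env}_A - (\alpha_{p_3}/w_2)\mathrm{Pr55},\\ \tfrac{d}{dt}\mathrm{p24}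 &= (\alpha_{p_3}/w_2)\mathrm{Pr55} - \gamma_{p_2}\mathrm{p24}, \end{aligned} \] with \[ f_{m_2}(\mathrm{Tat}) = \frac{\alpha_{m_2,A}}{v_a}\,\frac{1+v_a(\mathrm{Tat}/T_c)^n}{1+(\mathrm{Tat}/T_c)^n},\qquad k_A(\mathrm{Tat}) = \frac{\beta_{m_2,A}}{v_b}\,\frac{1+v_b(\mathrm{Tat}/T_c)^m}{1+(\mathrm{Tat}/T_c)^m}, \] where $v_a>1$, $v_b>1$. Then this system is positively invariant, i.e. solutions starting with all components nonnegative remain nonnegative for all $t\ge 0$.
   Context: All parameters ($k_{ON},k_{OFF},k_I,w_1,\dots,w_5,\alpha$'s, $\beta_{m_2,A}$, $\gamma$'s, $T_c=\mathrm{Tat}_{crit}$) are positive constants, and $n,m\ge 1$. The LTR variables represent proportions of a conserved total LTR: $\mathrm{LTR}_R+\mathrm{LTR}_I+\mathrm{LTR}_A=1$. *)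

From Stdlib Require Import Reals.
From Coquelicot Require Import Coquelicot.
Open Scope R_scope.

(* Real power x^y for a real (Hill) exponent y, with the convention
   0^y = 0 (y >= 1) and, off the model domain (x < 0), the value 0. *)
Definition hpow (x y : R) : R := if Rlt_dec 0 x then Rpower x y else 0.

Definition f_m2 (alpha_m2A va Tc n Tat : R) : R :=
  alpha_m2A / va * ((1 + va * hpow (Tat / Tc) n) / (1 + hpow (Tat / Tc) n)).

Definition k_A (beta_m2A vb Tc m Tat : R) : R :=
  beta_m2A / vb * ((1 + vb * hpow (Tat / Tc) m) / (1 + hpow (Tat / Tc) m)).

From Stdlib Require Import Reals Lra List Classical.
From Coquelicot Require Import Coquelicot.
Import ListNotations.
Open Scope R_scope.

(* The vector field is quasi-positive: if one component vanishes while the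
   others are nonnegative, its derivative is nonnegative, since every
   off-diagonal coefficient is nonnegative (the Hill factors k_A and f_m2 lie
   in [0, b_m2A] and [0, a_m2A]).  Quantitatively, at a point where all
   components are >= -E and one equals -E, that component's derivative is
   >= -K E, with K bounding the off-diagonal row sums.  Hence for L > K the
   perturbed trajectory x + eps e^(L t) has a strictly positive derivative at a
   first zero of any of its components, so by real induction it never reaches
   zero; letting eps -> 0 gives x >= 0. *)

Lemma filter_forall_In {U T : Type} {F : (U -> Prop) -> Prop} {FF : Filter F}
  (idx : list T) (P : T -> U -> Prop) :
  (forall i, In i idx -> F (P i)) -> F (fun u => forall i, In i idx -> P i u).
Proof.
  induction idx as [|j idx IH]; intros H.
  - apply filter_forall. intros u i [].
  - apply filter_imp with (fun u => P j u /\ forall i, In i idx -> P i u).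
    + intros u [Hj Hidx] i [<-|Hi]; auto.
    + apply filter_and; [apply H; left; reflexivity|].
      apply IH; intros i Hi; apply H; right; exact Hi.
Qed.

Lemma real_induction (P : R -> Prop) (a : R) :
  P a ->
  (forall x, a <= x -> (forall v, a <= v <= x -> P v) -> at_right x P) ->
  (forall x, a < x -> (forall v, a <= v < x -> P v) -> P x) ->
  forall t, a <= t -> P t.
Proof.
  intros Ha Hstep Hlim t Ht.
  apply NNPP; intros HPt.
  set (S := fun s => a <= s <= t /\ forall v, a <= v <= s -> P v).
  assert (HSa : S a) by (split; [lra | intros v Hv; replace v with a by lra; exact Ha]).
  destruct (completeness S) as [tau [Hub Hlub]].
  { exists t; intros s [Hs _]; lra. }
  { exists a; exact HSa. }
  assert (Htau : a <= tau <= t) by (split; [apply Hub, HSa | apply Hlub; intros s [Hs _]; lra]).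
  assert (Hbelow : forall v, a <= v < tau -> P v).
  { intros v Hv. apply NNPP; intros HPv.
    enough (tau <= v) by lra.
    apply Hlub; intros s [_ Hs]. apply Rnot_lt_le; intros Hvs. apply HPv, Hs; lra. }
  assert (Hupto : forall v, a <= v <= tau -> P v).
  { intros v Hv. destruct (Rlt_or_le v tau); [apply Hbelow; lra|].
    replace v with tau by lra.
    destruct (Req_dec tau a) as [->|Hne]; [exact Ha | apply Hlim; [lra | exact Hbelow]]. }
  assert (Htau_t : tau < t).
  { destruct (Req_dec tau t) as [<-|]; [exfalso; apply HPt, Hupto; lra | lra]. }
  destruct (Hstep tau (proj1 Htau) Hupto) as [d Hd].
  set (s := Rmin (tau + d / 2) t).
  assert (Hs : tau < s <= t).
  { pose proof (cond_pos d). split; [apply Rmin_glb_lt | apply Rmin_r]; lra. }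
  enough (S s) by (pose proof (Hub s H); lra).
  split; [lra|]. intros v Hv.
  destruct (Rle_or_lt v tau); [apply Hupto; lra|].
  apply Hd; [|lra]. change (Rabs (v - tau) < d).
  assert (s <= tau + d / 2) by apply Rmin_l.
  rewrite Rabs_pos_eq; pose proof (cond_pos d); lra.
Qed.

Lemma continuous_nonneg_at_left (f : R -> R) (x : R) :
  continuous f x -> at_left x (fun u => 0 <= f u) -> 0 <= f x.
Proof.
  intros Hf Hleft. apply Rnot_lt_le; intros Hneg.
  assert (Hnear : at_left x (fun u => f u < 0)).
  { apply filter_le_within. exact (Hf _ (open_lt 0 _ Hneg)). }
  destruct (filter_ex _ (filter_and _ _ Hleft Hnear)) as [u [H1 H2]]. lra.
Qed.

Lemma is_derive_nonpos_at_left_min (f : R -> R) (x d : R) :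
  is_derive f x d -> at_left x (fun u => f x <= f u) -> d <= 0.
Proof.
  intros Hd [e Hmin]. apply Rnot_lt_le; intros Hpos.
  destruct (proj1 (is_derive_Reals f x d) Hd d Hpos) as [e' Hquot].
  set (r := Rmin (e / 2) (e' / 2)).
  assert (Hr : 0 < r /\ r < e /\ r < e').
  { pose proof (cond_pos e); pose proof (cond_pos e').
    assert (r <= e / 2) by apply Rmin_l. assert (r <= e' / 2) by apply Rmin_r.
    split; [apply Rmin_pos|]; lra. }
  assert (Hq : Rabs ((f (x + - r) - f x) / - r - d) < d).
  { apply Hquot; [lra | rewrite Rabs_Ropp, Rabs_pos_eq; lra]. }
  assert (Hle : f x <= f (x + - r)).
  { apply Hmin; [|lra]. change (Rabs (x + - r - x) < e).
    replace (x + - r - x) with (- r) by ring. rewrite Rabs_Ropp, Rabs_pos_eq; lra. }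
  assert (Hnum : (f (x + - r) - f x) / - r <= 0).
  { replace ((f (x + - r) - f x) / - r) with (- ((f (x + - r) - f x) / r)) by (field; lra).
    enough (0 <= (f (x + - r) - f x) / r) by lra.
    apply Rdiv_le_0_compat; lra. }
  apply Rabs_def2 in Hq. lra.
Qed.

Section FirstContact.

Variables (T : Type) (idx : list T) (z dz : T -> R -> R).

Hypothesis z_pos_0 : forall i, In i idx -> 0 < z i 0.
Hypothesis z_pos_near_0 : forall i, In i idx -> at_right 0 (fun u => 0 < z i u).
Hypothesis z_derive : forall i u, In i idx -> 0 < u -> is_derive (z i) u (dz i u).
Hypothesis z_inward : forall i u, In i idx -> 0 < u ->
  (forall j, In j idx -> 0 <= z j u) -> z i u = 0 -> 0 < dz i u.

Lemma z_continuous i u : In i idx -> 0 < u -> continuous (z i) u.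
Proof.
  intros Hi Hu.
  exact (@ex_derive_continuous R_AbsRing R_NormedModule (z i) u
           (ex_intro _ (dz i u) (z_derive i u Hi Hu))).
Qed.

Lemma positive_forever : forall t, 0 <= t -> forall i, In i idx -> 0 < z i t.
Proof.
  apply (real_induction (fun t => forall i, In i idx -> 0 < z i t)); [exact z_pos_0 | |].
  - intros x Hx Hupto. destruct (Req_dec x 0) as [->|Hx0].
    + apply filter_forall_In, z_pos_near_0.
    + apply filter_le_within, filter_forall_In. intros i Hi.
      apply (z_continuous i x Hi ltac:(lra) (fun y => 0 < y)), open_gt, Hupto;
        [lra | exact Hi].
  - intros x Hx Hbelow.
    assert (Hleft : forall i, In i idx -> at_left x (fun u => 0 < z i u)).
    { intros i Hi. exists (mkposreal x Hx). intros u Hu Hux.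
      change (Rabs (u - x) < x) in Hu. apply Rabs_def2 in Hu.
      apply Hbelow; [lra | exact Hi]. }
    assert (Hnonneg : forall i, In i idx -> 0 <= z i x).
    { intros i Hi. apply continuous_nonneg_at_left.
      - apply z_continuous; [exact Hi | lra].
      - apply (filter_imp _ _ (fun u => Rlt_le 0 (z i u)) (Hleft i Hi)). }
    intros i Hi. destruct (Hnonneg i Hi) as [Hpos|Hzero]; [exact Hpos|exfalso].
    pose proof (z_inward i x Hi Hx Hnonneg (eq_sym Hzero)) as Hrise.
    enough (dz i x <= 0) by lra.
    apply (is_derive_nonpos_at_left_min (z i) x); [apply z_derive; [exact Hi | lra]|].
    rewrite <- Hzero. apply (filter_imp _ _ (fun u => Rlt_le 0 (z i u)) (Hleft i Hi)).
Qed.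

End FirstContact.

Section QuasiPositive.

Variables (T : Type) (idx : list T) (x dx : T -> R -> R) (K : R).

Hypothesis x_nonneg_0 : forall i, In i idx -> 0 <= x i 0.
Hypothesis x_right_cont_0 : forall i, In i idx ->
  filterlim (x i) (at_right 0) (locally (x i 0)).
Hypothesis x_derive : forall i u, In i idx -> 0 < u -> is_derive (x i) u (dx i u).
Hypothesis x_quasi_positive : forall i u E, In i idx -> 0 < u -> 0 < E ->
  (forall j, In j idx -> -E <= x j u) -> x i u = -E -> -(K * E) <= dx i u.

Let L := Rabs K + 1.

Lemma perturbed_positive (eps : R) : 0 < eps ->
  forall t, 0 <= t -> forall i, In i idx -> 0 < x i t + eps * exp (L * t).
Proof.
  intros Heps.
  assert (HL : 0 < L) by (unfold L; pose proof (Rabs_pos K); lra).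
  apply (positive_forever T idx (fun i u => x i u + eps * exp (L * u))
           (fun i u => dx i u + L * (eps * exp (L * u)))).
  - intros i Hi. rewrite Rmult_0_r, exp_0. pose proof (x_nonneg_0 i Hi). lra.
  - intros i Hi.
    assert (Hnear : at_right 0 (fun u => -eps < x i u)).
    { apply (x_right_cont_0 i Hi), open_gt. pose proof (x_nonneg_0 i Hi). lra. }
    assert (Hright : at_right 0 (fun u => 0 < u))
      by (exists (mkposreal 1 Rlt_0_1); intros u _ Hu; exact Hu).
    refine (filter_imp _ _ _ (filter_and _ _ Hnear Hright)); intros u [Hx Hu].
    pose proof (exp_ineq1_le (L * u)).
    assert (0 <= L * u) by nra.
    nra.
  - intros i u Hi Hu. apply (is_derive_plus (x i) (fun u => eps * exp (L * u)));
      [apply x_derive; assumption|].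
    auto_derive; [exact I | ring].
  - intros i u Hi Hu Hall Hzero.
    assert (HE : 0 < eps * exp (L * u)) by (apply Rmult_lt_0_compat; [lra | apply exp_pos]).
    set (E := eps * exp (L * u)) in *. clearbody E.
    assert (Hdx : -(K * E) <= dx i u).
    { apply (x_quasi_positive i u E Hi Hu HE); [|lra].
      intros j Hj. pose proof (Hall j Hj). lra. }
    assert (K <= Rabs K) by apply Rle_abs.
    unfold L in *. nra.
Qed.

Lemma nonneg_forever : forall t, 0 <= t -> forall i, In i idx -> 0 <= x i t.
Proof.
  intros t Ht i Hi. apply Rnot_lt_le; intros Hneg.
  pose proof (exp_pos (L * t)) as Hexp.
  set (eps := - x i t / (2 * exp (L * t))).
  assert (Heps : 0 < eps) by (apply Rdiv_lt_0_compat; lra).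
  pose proof (perturbed_positive eps Heps t Ht i Hi) as Hpos.
  replace (eps * exp (L * t)) with (- x i t / 2) in Hpos by (unfold eps; field; lra).
  lra.
Qed.

End QuasiPositive.

Lemma hpow_nonneg (x y : R) : 0 <= hpow x y.
Proof.
  unfold hpow. destruct (Rlt_dec 0 x); [left; apply exp_pos | lra].
Qed.

Lemma hill_ratio_bounds (b v h : R) : 0 <= b -> 1 <= v -> 0 <= h ->
  0 <= b / v * ((1 + v * h) / (1 + h)) <= b.
Proof.
  intros Hb Hv Hh.
  replace (b / v * ((1 + v * h) / (1 + h))) with (b * ((1 + v * h) / (v * (1 + h))))
    by (field; lra).
  assert (Hq : (1 + v * h) / (v * (1 + h)) * (v * (1 + h)) = 1 + v * h) by (field; lra).
  assert (0 < v * (1 + h)) by nra.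
  assert (0 <= (1 + v * h) / (v * (1 + h)) <= 1) by (split; nra).
  nra.
Qed.

Lemma k_A_bounds (b v Tc m T : R) : 0 <= b -> 1 <= v -> 0 <= k_A b v Tc m T <= b.
Proof. intros Hb Hv. apply hill_ratio_bounds, hpow_nonneg; assumption. Qed.

Lemma f_m2_bounds (a v Tc n T : R) : 0 <= a -> 1 <= v -> 0 <= f_m2 a v Tc n T <= a.
Proof. intros Ha Hv. apply hill_ratio_bounds, hpow_nonneg; assumption. Qed.

Lemma forall_In_map_fst {A B : Type} (P : A -> Prop) (l : list (A * B)) :
  (forall p, In p l -> P (fst p)) -> forall a, In a (map fst l) -> P a.
Proof.
  intros H a Ha. apply in_map_iff in Ha as [p [<- Hp]]. exact (H p Hp).
Qed.

Theorem mainTheorem3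
  (kON kOFF kI w1 w2 w3 w4 w5 : R)
  (a_p1 a_p2 a_p3 a_m1R a_m1I a_m1A a_m2I a_m2A b_m2A : R)
  (g_p1 g_p2 g_m1 g_m2 Tc va vb n m : R)
  (HkON : 0 < kON) (HkOFF : 0 < kOFF) (HkI : 0 < kI)
  (Hw1 : 0 < w1) (Hw2 : 0 < w2) (Hw3 : 0 < w3) (Hw4 : 0 < w4) (Hw5 : 0 < w5)
  (Hap1 : 0 < a_p1) (Hap2 : 0 < a_p2) (Hap3 : 0 < a_p3)
  (Ham1R : 0 < a_m1R) (Ham1I : 0 < a_m1I) (Ham1A : 0 < a_m1A)
  (Ham2I : 0 < a_m2I) (Ham2A : 0 < a_m2A) (Hbm2A : 0 < b_m2A)
  (Hgp1 : 0 < g_p1) (Hgp2 : 0 < g_p2) (Hgm1 : 0 < g_m1) (Hgm2 : 0 < g_m2)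
  (HTc : 0 < Tc) (Hva : 1 < va) (Hvb : 1 < vb) (Hn : 1 <= n) (Hm : 1 <= m)
  (LR LI LA Tat TAR envI envA Pr55 p24 : R -> R)
  (Hcont : forall X : R -> R,
      List.In X (LR :: LI :: LA :: Tat :: TAR :: envI :: envA :: Pr55 :: p24 :: nil) ->
      filterlim X (at_right 0) (locally (X 0)))
  (HLR : forall t, 0 < t -> is_derive LR t (kOFF * LI t - kON * LR t))
  (HLI : forall t, 0 < t -> is_derive LI t
      (- (w3 * w4 / w5 * k_A b_m2A vb Tc m (Tat t) + kOFF) * LI t
       + w1 * kI * LA t + kON * LR t))
  (HLA : forall t, 0 < t -> is_derive LA t
      (w3 * w4 / w5 * k_A b_m2A vb Tc m (Tat t) * LI t - w1 * kI * LA t))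
  (HTat : forall t, 0 < t -> is_derive Tat t (a_p1 * envI t - g_p1 * Tat t))
  (HTAR : forall t, 0 < t -> is_derive TAR t
      (a_m1R * LR t + a_m1I * LI t + a_m1A * LA t - g_m1 * TAR t))
  (HenvI : forall t, 0 < t -> is_derive envI t
      (a_m2I * LI t - (g_m2 + a_p1 + a_p2) * envI t))
  (HenvA : forall t, 0 < t -> is_derive envA t
      (f_m2 a_m2A va Tc n (Tat t) * LA t - (g_m2 + a_p2) * envA t))
  (HPr55 : forall t, 0 < t -> is_derive Pr55 t
      (a_p2 * envI t + a_p2 * envA t - (a_p3 / w2) * Pr55 t))
  (Hp24 : forall t, 0 < t -> is_derive p24 t ((a_p3 / w2) * Pr55 t - g_p2 * p24 t))
  (H0 : 0 <= LR 0 /\ 0 <= LI 0 /\ 0 <= LA 0 /\ 0 <= Tat 0 /\ 0 <= TAR 0 /\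
        0 <= envI 0 /\ 0 <= envA 0 /\ 0 <= Pr55 0 /\ 0 <= p24 0) :
  forall t, 0 <= t ->
    0 <= LR t /\ 0 <= LI t /\ 0 <= LA t /\ 0 <= Tat t /\ 0 <= TAR t /\
    0 <= envI t /\ 0 <= envA t /\ 0 <= Pr55 t /\ 0 <= p24 t.
Proof.
  set (c := w3 * w4 / w5).
  assert (Hc : 0 < c) by (apply Rdiv_lt_0_compat; [apply Rmult_lt_0_compat|]; lra).
  assert (Hall : forall t, 0 <= t -> forall p, In p
    [(LR, fun u => kOFF * LI u - kON * LR u);
     (LI, fun u => - (c * k_A b_m2A vb Tc m (Tat u) + kOFF) * LI u
                   + w1 * kI * LA u + kON * LR u);
     (LA, fun u => c * k_A b_m2A vb Tc m (Tat u) * LI u - w1 * kI * LA u);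
     (Tat, fun u => a_p1 * envI u - g_p1 * Tat u);
     (TAR, fun u => a_m1R * LR u + a_m1I * LI u + a_m1A * LA u - g_m1 * TAR u);
     (envI, fun u => a_m2I * LI u - (g_m2 + a_p1 + a_p2) * envI u);
     (envA, fun u => f_m2 a_m2A va Tc n (Tat u) * LA u - (g_m2 + a_p2) * envA u);
     (Pr55, fun u => a_p2 * envI u + a_p2 * envA u - (a_p3 / w2) * Pr55 u);
     (p24, fun u => (a_p3 / w2) * Pr55 u - g_p2 * p24 u)] -> 0 <= fst p t).
  (* K bounds the off-diagonal coefficient sum of every row. *)
  { apply (nonneg_forever _ _ fst snd (kOFF + kON + w1 * kI + c * b_m2A + a_p1 + a_m1R
             + a_m1I + a_m1A + a_m2I + a_m2A + 2 * a_p2 + a_p3 / w2)).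
    - intros p Hin. simpl in Hin. intuition (subst; simpl; tauto).
    - intros p Hin. apply Hcont. exact (in_map fst _ p Hin).
    - intros p u Hin Hu. simpl in Hin. intuition (subst; simpl; auto).
    - intros p u E Hin Hu HE Hlow Hself.
      assert (Hlow' := forall_In_map_fst (fun x => -E <= x u) _ Hlow). simpl in Hlow'.
      assert (-E <= LR u /\ -E <= LI u /\ -E <= LA u /\ -E <= Tat u /\ -E <= TAR u /\
              -E <= envI u /\ -E <= envA u /\ -E <= Pr55 u /\ -E <= p24 u)
        as (?&?&?&?&?&?&?&?&?) by (repeat split; apply Hlow'; simpl; tauto).
      pose proof (k_A_bounds b_m2A vb Tc m (Tat u) ltac:(lra) ltac:(lra)).
      pose proof (f_m2_bounds a_m2A va Tc n (Tat u) ltac:(lra) ltac:(lra)).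
      assert (0 <= c * k_A b_m2A vb Tc m (Tat u) <= c * b_m2A) by (split; nra).
      assert (0 < a_p3 / w2) by (apply Rdiv_lt_0_compat; lra).
      assert (0 < w1 * kI) by (apply Rmult_lt_0_compat; lra).
      clear Hlow Hlow' Hcont HLR HLI HLA HTat HTAR HenvI HenvA HPr55 Hp24 H0.
      simpl in Hin. intuition (subst; simpl in *; rewrite Hself).
      all: nra. }
  intros t Ht.
  pose proof (forall_In_map_fst (fun x => 0 <= x t) _ (Hall t Ht)) as Hnonneg. simpl in Hnonneg.
  repeat split; apply Hnonneg; tauto.
Qed.
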